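(* Let $G$ be an extraspecial or almost extraspecial $2$-group of order $2^n$, $n\geq 3$. Then $e_2(G)\leq e_2(D_8\times C_2^{n-3})$.
   Context: A finite $2$-group $G$ is extraspecial if $Z(G)=G'=\Phi(G)$ has order $2$, and almost extraspecial if $G'=\Phi(G)$ has order $2$ and $Z(G)\cong C_4$. For a finite $2$-group $H$ and $i\ge 2$, $e_i(H)$ denotes the number of elementary abelian subgroups of $H$ of order $2^i$ containing the Frattini subgroup $\Phi(H)$. $D_8$ is the dihedral group of order $8$, $C_2^m$ the elementary abelian group of order $2^m$. *)

From mathcomp Require Import all_boot all_fingroup all_solvable.
Set Implicit Arguments.
Unset Strict Implicit.
Unset Printing Implicit Defensive.
Local Open Scope group_scope.

Definition extraspecial2 (gT : finGroupType) (G : {set gT}) : Prop :=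
  [/\ 2.-group G, 'Z(G) = G^`(1), G^`(1) = 'Phi(G) & #|'Z(G)| = 2%N].

Definition almost_extraspecial2 (gT : finGroupType) (G : {set gT}) : Prop :=
  [/\ 2.-group G, G^`(1) = 'Phi(G), #|G^`(1)| = 2%N,
      cyclic 'Z(G) & #|'Z(G)| = 4%N].

Definition e_ (i : nat) (gT : finGroupType) (H : {set gT}) : nat :=
  #|[set A : {group gT} | [&& A \subset H, 2.-abelem A,
                              #|A| == (2 ^ i)%N & 'Phi(H) \subset A]]|.

(* Write sqrt1 H for the set of elements of H whose square is 1.  If Phi(H)
   has order 2 it is central, and every x in sqrt1 H outside Phi(H) lies in
   exactly one Klein four-group containing Phi(H), namely Phi(H)<x>, which in
   turn contains exactly two such elements; hence |sqrt1 H| = 2 e_2(H) + 2.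
   In a nonabelian group at most three quarters of the elements square to 1:
   otherwise sqrt1 G meets its translate x sqrt1 G, for x in sqrt1 G, in more
   than half of G, and all those elements commute with x, so sqrt1 G would be
   central.  Thus |sqrt1 G| <= 6 * 2^(n-3), whereas in D_8 x C_2^(n-3) exactly
   6 * 2^(n-3) elements square to 1. *)

From mathcomp Require Import all_boot all_fingroup all_solvable zify.
Set Implicit Arguments.
Unset Strict Implicit.
Unset Printing Implicit Defensive.
Local Open Scope group_scope.

Lemma sum_nat_of_bool (T : finType) (A : {pred T}) (p : pred T) :
  \sum_(i in A) p i = #|[set i in A | p i]|.
Proof.
by rewrite -sum1dep_card big_mkcondr; apply: eq_bigr => i _; case: (p i).
Qed.

Section SquareRootsOfOne.

Variable gT : finGroupType.
Implicit Types (A B : {set gT}) (G H D E K P : {group gT}) (x y : gT).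

Definition sqrt1 A := [set x in A | x ^+ 2 == 1].

Lemma sqrt1_sub A : sqrt1 A \subset A.
Proof. by apply/subsetP=> x; rewrite inE => /andP[]. Qed.

Lemma sqrt1_abelem E : 2.-abelem E -> sqrt1 E = E.
Proof.
case/(abelemP (isT : prime 2))=> _ E2.
apply/eqP; rewrite eqEsubset sqrt1_sub /=.
by apply/subsetP=> x Ex; rewrite inE Ex; apply/eqP/E2.
Qed.

Lemma invg_sqrt1 x : x ^+ 2 = 1 -> x^-1 = x.
Proof. by move=> x2; apply/eqP; rewrite eq_invg_mul -expg2 x2. Qed.

Lemma commute_sqrt1 x y :
  x ^+ 2 = 1 -> y ^+ 2 = 1 -> (x * y) ^+ 2 = 1 -> commute x y.
Proof.
by move=> x2 y2 /invg_sqrt1 xy2; rewrite /commute -{1}xy2 invMg !invg_sqrt1.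
Qed.

Lemma subgroup_gt_half_eq G H : H \subset G -> #|G| < 2 * #|H| -> H :=: G.
Proof.
move=> sHG; rewrite -(Lagrange sHG) mulnC ltn_pmul2r ?cardG_gt0 // => lt_iHG.
by apply: index1g sHG _; apply/eqP; rewrite eqn_leq -ltnS lt_iHG indexg_gt0.
Qed.

Lemma sqrt1_cent1 G x :
  x \in sqrt1 G -> 2 * #|sqrt1 G| <= #|G| + #|'C_G[x]|.
Proof.
rewrite inE => /andP[Gx /eqP x2]; set I := sqrt1 G.
have sIxIC : I :&: x^-1 *: I \subset 'C_G[x].
  apply/subsetP=> y /setIP[Iy]; rewrite mem_lcoset invgK => Ixy.
  rewrite !inE in Iy Ixy.
  case/andP: Iy => Gy /eqP y2; case/andP: Ixy => _ /eqP xy2.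
  by rewrite in_setI Gy; apply/cent1P/commute_sym/commute_sqrt1.
have sIUxIG : I :|: x^-1 *: I \subset G.
  by rewrite subUset sqrt1_sub -(lcoset_id (groupVr Gx)) lcosetS ?sqrt1_sub.
have := leq_add (subset_leq_card sIUxIG) (subset_leq_card sIxIC).
by rewrite cardsUI card_lcoset addnn -mul2n.
Qed.

Lemma sqrt1_sub_center G : 3 * #|G| < 4 * #|sqrt1 G| -> sqrt1 G \subset 'Z(G).
Proof.
move=> large; apply/subsetP=> x Ix; have Gx := subsetP (sqrt1_sub G) x Ix.
have CGx : 'C_G[x] = G.
  apply: subgroup_gt_half_eq (subsetIl _ _) _; have := sqrt1_cent1 Ix.
  (* [set] merges cardinals that differ only in their canonical instances,
     which [lia] would otherwise treat as unrelated atoms. *)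
  set g := #|G| in large *; set i := #|sqrt1 G| in large *.
  set c := #|_ :&: _|; lia.
by rewrite inE Gx -sub_cent1 -CGx subsetIr.
Qed.

Lemma card_sqrt1_nonabelian G : ~~ abelian G -> 4 * #|sqrt1 G| <= 3 * #|G|.
Proof.
apply: contraR; rewrite -ltnNge => large; apply/center_idP.
apply: subgroup_gt_half_eq (center_sub G) _.
have := subset_leq_card (sqrt1_sub_center large).
set g := #|G| in large *; set i := #|sqrt1 G| in large *.
by set z := #|'Z(G)|; lia.
Qed.

Lemma card_mul_TI D E A B :
  D :&: E = 1 -> A \subset D -> B \subset E -> #|A * B| = (#|A| * #|B|)%N.
Proof.
move=> tiDE sAD sBE; rewrite -imset_mulgm -cardsX; apply: card_in_imset.
move=> [a1 b1] [a2 b2] /setXP[/(subsetP sAD) Da1 /(subsetP sBE) Eb1].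
case/setXP=> /(subsetP sAD) Da2 /(subsetP sBE) Eb2 /= eq12.
congr pair.
  by rewrite -(divgrMid tiDE Da1 Eb1) eq12 divgrMid.
by rewrite -(remgrMid tiDE Da1 Eb1) eq12 remgrMid.
Qed.

Lemma sqrt1_dprod D E K : D \x E = K -> sqrt1 D * sqrt1 E = sqrt1 K.
Proof.
case/dprodP=> _ defK cDE tiDE.
have sqrMDE d e : d \in D -> e \in E -> (d * e) ^+ 2 = d ^+ 2 * e ^+ 2.
  move=> Dd Ee; rewrite expgMn //.
  by apply/commute_sym/(centP (subsetP cDE e Ee)).
apply/eqP; rewrite eqEsubset; apply/andP; split; apply/subsetP=> k.
  case/mulsgP=> d e; rewrite !inE => /andP[Dd /eqP d2] /andP[Ee /eqP e2] ->.
  by rewrite -defK mem_mulg // sqrMDE // d2 e2 mulg1 eqxx.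
rewrite inE -defK => /andP[/mulsgP[d e Dd Ee ->]].
rewrite sqrMDE // mulg_eq1 => /eqP de2.
have d2 : d ^+ 2 = 1.
  by apply/set1gP; rewrite -tiDE inE groupX //= de2 groupV groupX.
have e2 : e ^+ 2 = 1 by rewrite -[e ^+ 2]invgK -de2 d2 invg1.
by rewrite mem_mulg // inE ?Dd ?Ee ?d2 ?e2 ?eqxx.
Qed.

Lemma card_sqrt1_dprod D E K :
  D \x E = K -> #|sqrt1 K| = (#|sqrt1 D| * #|sqrt1 E|)%N.
Proof.
move=> defK; have [_ _ _ tiDE] := dprodP defK.
by rewrite -(sqrt1_dprod defK) (card_mul_TI tiDE) ?sqrt1_sub.
Qed.

Lemma card_sqrt1_dihedral8 D : D \isog 'D_8 -> #|sqrt1 D| = 6.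
Proof.
move=> isoD; have [[x y] genD _] := generators_2dihedral (isT : 1 < 3) isoD.
have [[_ oDX _] _ _ _ _] := dihedral2_structure (isT : 1 < 3) genD isoD.
have [oD Dx ox _] := genD; have sXD : <[x]> \subset D by rewrite cycle_subG.
have ox2 : #|<[x ^+ 2]>| = 2 by rewrite -orderE orderXdiv ox.
have sqrt1X : sqrt1 D :&: <[x]> = <[x ^+ 2]>.
  apply/eqP; rewrite eqEsubset; apply/andP; split; apply/subsetP=> z.
    rewrite !inE andbC => /andP[/cycleP[k ->] /andP[_ z2]].
    rewrite -expgM -order_dvdn ox -[(2 ^ _)%N]/(2 * 2)%N dvdn_pmul2r // in z2.
    by rewrite -(divnK z2) mulnC expgM mem_cycle.
  move=> Xz; have Xx_z := subsetP (cycleX x 2) z Xz.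
  by rewrite !inE (subsetP sXD) //= -ox2 expg_cardG ?eqxx.
have sqrt1DX : sqrt1 D :\: <[x]> = D :\: <[x]>.
  apply/setP=> t; rewrite !inE andbA.
  case DXt: ((t \notin <[x]>) && (t \in D)) => //=.
  by rewrite -(oDX t) ?expg_order ?eqxx // inE DXt.
by rewrite -(cardsID <[x]>) sqrt1X sqrt1DX ox2 cardsDS // oD -orderE ox.
Qed.

Lemma card2_normal_sub_center G P : P <| G -> #|P| = 2 -> P \subset 'Z(G).
Proof.
case/andP=> sPG nPG oP; have P1 : #|P :\ 1| <= 1.
  by have := cardsD1 1 P; rewrite group1 oP add1n => -[<-].
rewrite subsetI sPG; apply/centsP=> z Pz x Gx.
have [-> | nt_z] := eqVneq z 1; first exact/commute_sym/commute1.
apply/commgP/conjg_fixP; apply: (card_le1_eqP P1).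
  by rewrite !inE nt_z.
by rewrite !inE conjg_eq1 nt_z memJ_norm ?(subsetP nPG).
Qed.

Definition klein4_over (H P : {set gT}) :=
  [set A : {group gT} | [&& A \subset H, 2.-abelem A, #|A| == 4 & P \subset A]].

Section KleinFourOverCentralInvolution.

Variables H P : {group gT}.
Hypotheses (sPZ : P \subset 'Z(H)) (oP : #|P| = 2).

Let sPH : P \subset H := subset_trans sPZ (center_sub H).
Let cHP : H \subset 'C(P).
Proof. by rewrite centsC (subset_trans sPZ) ?subsetIr. Qed.

Let sPsqrt1 : P \subset sqrt1 H.
Proof.
apply/subsetP=> z Pz; rewrite inE (subsetP sPH) //.
by rewrite -oP expg_cardG ?eqxx.
Qed.

Lemma klein4_over_join x :
  x \in sqrt1 H :\: P -> (P <*> <[x]>)%G \in klein4_over H P.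
Proof.
case/setDP; rewrite inE => /andP[Hx /eqP x2] notPx.
have ox : #|<[x]>| = 2.
  by rewrite -orderE (nt_prime_order _ x2) //; apply: contraNneq notPx => ->.
have cPx : <[x]> \subset 'C(P) by rewrite cycle_subG (subsetP cHP).
have tiPx : P :&: <[x]> = 1 by rewrite setIC prime_TIg ?ox ?cycle_subG.
have defA := dprodEY cPx tiPx.
rewrite inE join_subG sPH cycle_subG Hx joing_subl.
by rewrite (dprod_abelem 2 defA) !prime_abelem // -(dprod_card defA) oP ox.
Qed.

Lemma klein4_over_uniq x (A : {group gT}) :
    x \in sqrt1 H :\: P -> A \in klein4_over H P -> x \in A ->
  A = (P <*> <[x]>)%G.
Proof.
move=> Ix; rewrite inE => /and4P[_ _ /eqP oA sPA] Ax; apply/val_inj/eqP.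
have := klein4_over_join Ix; rewrite inE => /and4P[_ _ /eqP oPx _].
by rewrite eq_sym eqEcard join_subG sPA cycle_subG Ax oA oPx /=.
Qed.

Lemma card_sqrt1_klein4_over : #|sqrt1 H| = (2 * #|klein4_over H P| + 2)%N.
Proof.
set S := klein4_over H P; set X := sqrt1 H :\: P.
have count_groups x : x \in X -> \sum_(A in S) (x \in A) = 1%N.
  move=> Xx; rewrite sum_nat_of_bool; apply: (eq_card1 (x := (P <*> <[x]>)%G)).
  move=> A; rewrite inE; apply/andP/eqP=> [[SA Ax] | ->].
    exact: klein4_over_uniq.
  split; first exact: klein4_over_join.
  by rewrite (subsetP (joing_subr _ _)) ?cycle_id.
have count_elements (A : {group gT}) : A \in S -> \sum_(x in X) (x \in A) = 2%N.
  rewrite inE => /and4P[sAH /(abelemP (isT : prime 2))[_ A2] /eqP oA sPA].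
  rewrite sum_nat_of_bool -[2%N]/(4 - 2)%N -oA -oP -(cardsDS sPA).
  apply: eq_card => x; rewrite !inE -andbA.
  by case Ax: (x \in A); rewrite ?andbF // (subsetP sAH) // A2 // eqxx !andbT.
rewrite -(cardsID P) (setIidPr sPsqrt1) oP addnC; congr (_ + 2)%N.
rewrite -sum1_card (eq_bigr _ (fun x Xx => esym (count_groups x Xx))).
by rewrite exchange_big (eq_bigr _ count_elements) sum_nat_const mulnC.
Qed.

End KleinFourOverCentralInvolution.

Lemma card_sqrt1_e2 H : #|'Phi(H)| = 2 -> #|sqrt1 H| = (2 * e_ 2 H + 2)%N.
Proof.
move=> oPhi; have cPhi := card2_normal_sub_center (Phi_normal H) oPhi.
exact: card_sqrt1_klein4_over cPhi oPhi.
Qed.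

Lemma Phi_dprod_abelem (p : nat) D E K :
  p.-group D -> p.-abelem E -> D \x E = K -> 'Phi(K) = 'Phi(D).
Proof.
move=> pD abE /dprodP[_ <- cDE _]; have pE := abelem_pgroup abE.
have /eqP PhiE1 : 'Phi(E) == 1 by rewrite (trivg_Phi pE).
by rewrite (Phi_mulg pD pE cDE) PhiE1 mulg1.
Qed.

Lemma card_Phi_dihedral8 D : D \isog 'D_8 -> #|'Phi(D)| = 2.
Proof.
move=> isoD; have [[x y] genD _] := generators_2dihedral (isT : 1 < 3) isoD.
by have [_ [_ -> -> _] _ _ _] := dihedral2_structure (isT : 1 < 3) genD isoD.
Qed.

Lemma extraspecial2_Phi_nonabelian G :
  extraspecial2 G \/ almost_extraspecial2 G -> #|'Phi(G)| = 2 /\ ~~ abelian G.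
Proof.
have nonabelian : #|G^`(1)| = 2 -> ~~ abelian G.
  by move=> oG'; apply/negP=> /derG1P abG; rewrite abG cards1 in oG'.
case=> [[_ ZG <- oZ] | [_ <- oG' _ _]]; last by rewrite oG' nonabelian.
by rewrite -ZG oZ nonabelian -?ZG.
Qed.

End SquareRootsOfOne.

Unset Implicit Arguments.

Theorem lemma2p6 (gT : finGroupType) (G : {group gT}) (n : nat)
  (hG : extraspecial2 G \/ almost_extraspecial2 G)
  (hn : 3 <= n) (hord : #|G| = (2 ^ n)%N)
  (kT : finGroupType) (K D E : {group kT})
  (hK : D \x E = K) (hD : D \isog 'D_8) (hE : 2.-abelem E)
  (hEord : #|E| = (2 ^ (n - 3))%N) :
  e_ 2 G <= e_ 2 K.
Proof.
have [oPhiG nabG] := extraspecial2_Phi_nonabelian hG.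
have pD : 2.-group D.
  have oD8 : #|'D_8| = 8 := card_2dihedral (isT : 1 < 3).
  by rewrite /pgroup (card_isog hD) oD8.
have oPhiK : #|'Phi(K)| = 2.
  by rewrite (Phi_dprod_abelem pD hE hK) card_Phi_dihedral8.
have sqrt1K : #|sqrt1 K| = (6 * 2 ^ (n - 3))%N.
  rewrite (card_sqrt1_dprod hK) (card_sqrt1_dihedral8 hD).
  by rewrite (sqrt1_abelem hE) hEord.
have oG : #|G| = (8 * 2 ^ (n - 3))%N by rewrite hord -(subnKC hn) expnD addKn.
have := card_sqrt1_nonabelian nabG.
rewrite oG (card_sqrt1_e2 oPhiG); rewrite card_sqrt1_e2 // in sqrt1K.
lia.
Qed.
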